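(* Let $\mathsf{R}^s$ be the set of all symmetric Epstein relations and $\mathsf{R}^n$ the set of all Epstein relations $\mathfrak{R}$ satisfying: for all $\varphi,\psi\in\mathsf{FOR}$, if $\langle\neg\varphi,\psi\rangle\in\mathfrak{R}$ then $\langle\varphi,\psi\rangle\in\mathfrak{R}$. Neither $\mathsf{R}^s$ nor $\mathsf{R}^n$ is definable.
   Context: Language: propositional letters $\Phi=\{p_0,p_1,\dots\}$; connectives $\neg$, $\lor,\wedge,\to,\leftrightarrow,\vartriangle,\looparrowright$; $\mathsf{FOR}$ the set of all formulas. An Epstein model is $\langle v,\mathfrak{R}\rangle$ with $v:\Phi\to\{0,1\}$ and $\mathfrak{R}\subseteq\mathsf{FOR}^2$ (an Epstein relation); truth: letters via $v$, boolean connectives classical, $\langle v,\mathfrak{R}\rangle\vDash\varphi\vartriangle\psi$ iff both true and $\langle\varphi,\psi\rangle\in\mathfrak{R}$; $\langle v,\mathfrak{R}\rangle\vDash\varphi\looparrowright\psi$ iff $\varphi\to\psi$ true and $\langle\varphi,\psi\rangle\in\mathfrak{R}$. $\mathfrak{R}\vDash\varphi$ iff $\langle v,\mathfrak{R}\rangle\vDash\varphi$ for every valuation $v$; $\mathfrak{R}\vDash\Gamma$ iff $\mathfrak{R}\vDash\gamma$ for every $\gamma\in\Gamma$. A set $\mathsf{K}$ of Epstein relations is definable iff there is $\Gamma\subseteq\mathsf{FOR}$ such that for every Epstein relation $\mathfrak{R}$: $\mathfrak{R}\vDash\Gamma$ iff $\mathfrak{R}\in\mathsf{K}$. *)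

Inductive formula : Type :=
  | Var : nat -> formula
  | Neg : formula -> formula
  | Or : formula -> formula -> formula
  | And : formula -> formula -> formula
  | Imp : formula -> formula -> formula
  | Iff : formula -> formula -> formula
  | RelAnd : formula -> formula -> formula
  | RelImp : formula -> formula -> formula.

Definition epstein_relation : Type := formula -> formula -> Prop.

Definition valuation : Type := nat -> bool.

Fixpoint sat (v : valuation) (R : epstein_relation) (f : formula) : Prop :=
  match f with
  | Var n => v n = true
  | Neg a => ~ sat v R a
  | Or a b => sat v R a \/ sat v R b
  | And a b => sat v R a /\ sat v R b
  | Imp a b => sat v R a -> sat v R b
  | Iff a b => (sat v R a <-> sat v R b)
  | RelAnd a b => (sat v R a /\ sat v R b) /\ R a b
  | RelImp a b => (sat v R a -> sat v R b) /\ R a b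
  end.

Definition rvalid (R : epstein_relation) (f : formula) : Prop :=
  forall v : valuation, sat v R f.

Definition rvalid_set (R : epstein_relation) (G : formula -> Prop) : Prop :=
  forall g, G g -> rvalid R g.

Definition definable (K : epstein_relation -> Prop) : Prop :=
  exists G : formula -> Prop, forall R : epstein_relation, rvalid_set R G <-> K R.

Definition R_sym (R : epstein_relation) : Prop :=
  forall a b, R a b -> R b a.

Definition R_neg (R : epstein_relation) : Prop :=
  forall a b, R (Neg a) b -> R a b.

(* Under a valuation v, truth in <v, R> consults R only at pairs <φ, ψ> for
   which φ → ψ is true under v; changing R at a pair whose implication fails
   under v changes nothing.  Hence if, for each v separately, R agrees with
   some member of a definable class K up to such pairs, then R validates
   every Γ defining K, so R belongs to K.  With p a letter, <p, ¬p> is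
   v-irrelevant when p is true and <¬p, p> when p is false, so the
   non-symmetric {<p, ¬p>} passes for the empty relation or for its
   symmetric closure.  Likewise {<¬p, p ∧ ¬p>}, outside R^n, passes for the
   empty relation or for {<¬p, p ∧ ¬p>, <p, p ∧ ¬p>}. *)

From Stdlib Require Import Setoid.

Definition rel_empty : epstein_relation := fun _ _ => False.

Definition rel_pair (a b : formula) : epstein_relation :=
  fun x y => x = a /\ y = b.

Definition rel_union (R S : epstein_relation) : epstein_relation :=
  fun x y => R x y \/ S x y.

Definition falsum : formula := And (Var 0) (Neg (Var 0)).

Lemma sat_rel_agree (v : valuation) (R S : epstein_relation) :
  (forall a b, (sat v R a -> sat v R b) -> (R a b <-> S a b)) ->
  forall f, sat v R f <-> sat v S f.
Proof.
  intros HRS f; induction f as [| | | | | | a IHa b IHb | a IHa b IHb];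
    simpl; try tauto.
  - rewrite <- IHa, <- IHb.
    split; intros [[Ha Hb] Hr]; split; auto; apply (HRS a b); auto.
  - rewrite <- IHa, <- IHb.
    split; intros [Hi Hr]; split; auto; apply (HRS a b); auto.
Qed.

Lemma sat_rel_off_pair (v : valuation) (R S : epstein_relation) (a b : formula) :
  ~ (sat v R a -> sat v R b) ->
  (forall x y, ~ (x = a /\ y = b) -> (R x y <-> S x y)) ->
  forall f, sat v R f <-> sat v S f.
Proof.
  intros Hab HRS; apply sat_rel_agree; intros x y Hxy.
  apply HRS; intros [-> ->]; contradiction.
Qed.

Lemma definable_closed_valuationwise (K : epstein_relation -> Prop)
    (R : epstein_relation) :
  definable K ->
  (forall v, exists2 S, K S & forall f, sat v R f <-> sat v S f) ->
  K R.
Proof.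
  intros [G HG] Hloc; apply HG; intros g Hg v.
  destruct (Hloc v) as [S KS HRS].
  apply HRS, (proj2 (HG S) KS g Hg v).
Qed.

Lemma R_sym_empty : R_sym rel_empty.
Proof. intros a b []. Qed.

Lemma R_sym_pair_closure (a b : formula) :
  R_sym (rel_union (rel_pair a b) (rel_pair b a)).
Proof. intros x y [[-> ->] | [-> ->]]; [right | left]; split; reflexivity. Qed.

Lemma not_R_sym_pair (a b : formula) : a <> b -> ~ R_sym (rel_pair a b).
Proof. intros Hab Hs; destruct (Hs a b (conj eq_refl eq_refl)); auto. Qed.

Lemma R_neg_empty : R_neg rel_empty.
Proof. intros a b []. Qed.

Lemma R_neg_pair_closure (n : nat) (c : formula) :
  R_neg (rel_union (rel_pair (Neg (Var n)) c) (rel_pair (Var n) c)).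
Proof.
  intros a b [[Ha ->] | [Ha _]]; [| discriminate].
  injection Ha as ->; right; split; reflexivity.
Qed.

Lemma not_R_neg_pair (n : nat) (c : formula) :
  ~ R_neg (rel_pair (Neg (Var n)) c).
Proof. intros Hn; destruct (Hn (Var n) c (conj eq_refl eq_refl)); discriminate. Qed.

Lemma not_definable_R_sym : ~ definable R_sym.
Proof.
  intros Hdef.
  apply (not_R_sym_pair (Var 0) (Neg (Var 0))); [discriminate |].
  apply (definable_closed_valuationwise _ _ Hdef); intros v.
  destruct (v 0) eqn:Hp.
  - exists rel_empty; [exact R_sym_empty |].
    apply (sat_rel_off_pair _ _ _ (Var 0) (Neg (Var 0))).
    + simpl; rewrite Hp; auto.
    + intros x y Hxy; unfold rel_pair, rel_empty; tauto.
  - exists (rel_union (rel_pair (Var 0) (Neg (Var 0)))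
                      (rel_pair (Neg (Var 0)) (Var 0)));
      [apply R_sym_pair_closure |].
    apply (sat_rel_off_pair _ _ _ (Neg (Var 0)) (Var 0)).
    + simpl; rewrite Hp; intros Himp; discriminate (Himp ltac:(discriminate)).
    + intros x y Hxy; unfold rel_union, rel_pair in *; tauto.
Qed.

Lemma not_definable_R_neg : ~ definable R_neg.
Proof.
  intros Hdef.
  apply (not_R_neg_pair 0 falsum).
  apply (definable_closed_valuationwise _ _ Hdef); intros v.
  destruct (v 0) eqn:Hp.
  - exists (rel_union (rel_pair (Neg (Var 0)) falsum) (rel_pair (Var 0) falsum));
      [apply R_neg_pair_closure |].
    apply (sat_rel_off_pair _ _ _ (Var 0) falsum).
    + simpl; tauto.
    + intros x y Hxy; unfold rel_union, rel_pair in *; tauto.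
  - exists rel_empty; [exact R_neg_empty |].
    apply (sat_rel_off_pair _ _ _ (Neg (Var 0)) falsum).
    + simpl; rewrite Hp; intros Himp; destruct (Himp ltac:(discriminate)); discriminate.
    + intros x y Hxy; unfold rel_pair, rel_empty; tauto.
Qed.

Theorem mainTheorem11 : ~ definable R_sym /\ ~ definable R_neg.
Proof. exact (conj not_definable_R_sym not_definable_R_neg). Qed.
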